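(* Let $P$ be a control flow automaton, let $\pi$ be a looping trace of $P$, and let $\hat{\pi}$ be an under-approximating accelerator for $\pi$ with bound function $\beta$ (satisfying the monotonicity property stated in the context). Then $\hat{\pi}\cdot\hat{\pi}\preceq\hat{\pi}$, i.e. $[\![\hat{\pi}\cdot\hat{\pi}]\!]\subseteq[\![\hat{\pi}]\!]$.
   Context: Programs are over a finite set $\mathsf{Vars}$ of program variables; a state $\sigma$ is a total function assigning a value to each variable, and $\mathsf{States}$ is the set of states. Statements are assignments $x:=e$ (set $x$ to the value of expression $e$, other variables unchanged), nondeterministic assignments $x:=*$ (set $x$ to an arbitrary value), assumptions $[B]$ for a predicate $B$ (the identity relation restricted to states satisfying $B$), and $\mathsf{skip}$ (identity). Each statement $s$ denotes a transition relation $[\![s]\!]\subseteq\mathsf{States}\times\mathsf{States}$. A trace is a finite sequence of statements; its relation is the relational composition $[\![s_1\cdot s_2\cdots s_n]\!]=[\![s_1]\!]\circ\cdots\circ[\![s_n]\!]$ (first $s_1$, then $s_2$, etc.), the empty trace denoting the identity; $[\![\pi]\!]^0$ is the identity and $[\![\pi]\!]^n=[\![\pi]\!]\circ[\![\pi]\!]^{n-1}$. A control flow automaton (CFA) $P=\langle V,E,v_0\rangle$ has finitely many vertices $V$, edges $E\subseteq V\times\mathsf{Stmts}_P\times V$ labelled by statements from a finite set $\mathsf{Stmts}_P$, and initial vertex $v_0$. A trace $s_i\cdots s_n$ of $P$ is the label sequence of a path $v_{i-1}\xrightarrow{s_i}v_i\cdots\xrightarrow{s_n}v_n$; it is looping if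 the path starts and ends at the same vertex (its head). An under-approximating accelerator for a looping trace $\pi$ is a finite sequence of statements $\hat{\pi}$ (not necessarily over $\mathsf{Stmts}_P$) together with a function $\beta:\mathsf{States}\to\mathbb{N}_0$ such that $\langle\sigma,\sigma'\rangle\in[\![\hat{\pi}]\!]$ iff there is $i\in\mathbb{N}_0$ with $i\le\beta(\sigma)$ and $\langle\sigma,\sigma'\rangle\in[\![\pi]\!]^i$, and such that for all $i,\sigma,\sigma'$: if $i\le\beta(\sigma)$ and $\langle\sigma,\sigma'\rangle\in[\![\pi]\!]^i$ then $\beta(\sigma')\le\beta(\sigma)-i$. A trace $\pi_2$ is subsumed by $\pi_1$, written $\pi_2\preceq\pi_1$, if $[\![\pi_2]\!]\subseteq[\![\pi_1]\!]$. *)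

From Stdlib Require Import List.
From mathcomp Require Import all_boot.
Set Implicit Arguments.
Unset Strict Implicit.
Unset Printing Implicit Defensive.

Section Programs.
Variables (Vars : finType) (Val : Type).

Definition State := Vars -> Val.
Definition rel := State -> State -> Prop.

Definition expr := State -> Val.
Definition pred_st := State -> Prop.

Inductive stmt :=
| Assign of Vars & expr
| Havoc of Vars
| Assume of pred_st
| Skip.

Definition upd (s : State) (x : Vars) (v : Val) : State :=
  fun y => if y == x then v else s y.

Definition stmt_rel (st : stmt) : rel :=
  match st with
  | Assign x e => fun s s' => s' = upd s x (e s)
  | Havoc x => fun s s' => exists v, s' = upd s x v
  | Assume B => fun s s' => B s /\ s' = s
  | Skip => fun s s' => s' = s
  end.

Definition rcomp (R S : rel) : rel := fun s s'' => exists s', R s s' /\ S s' s''.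
Definition rid : rel := fun s s' => s' = s.

Fixpoint rpow (R : rel) (n : nat) : rel :=
  match n with
  | 0 => rid
  | n'.+1 => rcomp R (rpow R n')
  end.

Definition trace := seq stmt.

Fixpoint trace_rel (t : trace) : rel :=
  match t with
  | [::] => rid
  | st :: t' => rcomp (stmt_rel st) (trace_rel t')
  end.

Definition rsubset (R S : rel) : Prop := forall s s', R s s' -> S s s'.

Definition subsumed (t2 t1 : trace) : Prop := rsubset (trace_rel t2) (trace_rel t1).

(* Control flow automaton with vertex type V; the finite edge set is a list
   (hence the set of statements labelling edges is finite). *)
Record CFA (V : finType) := mkCFA {
  cfa_edges : seq (V * stmt * V);
  cfa_init : V
}.

Inductive path_of (V : finType) (E : seq (V * stmt * V)) : V -> trace -> V -> Prop :=
| path_nil v : path_of E v [::] v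
| path_cons v st v1 t w :
    List.In (v, st, v1) E -> path_of E v1 t w -> path_of E v (st :: t) w.

Definition is_trace (V : finType) (P : CFA V) (t : trace) : Prop :=
  exists v w, path_of (cfa_edges P) v t w.

Definition looping_trace (V : finType) (P : CFA V) (t : trace) : Prop :=
  exists v, path_of (cfa_edges P) v t v.

Definition under_accelerator (pi pihat : trace) (beta : State -> nat) : Prop :=
  (forall s s', trace_rel pihat s s' <->
     exists i, i <= beta s /\ rpow (trace_rel pi) i s s') /\
  (forall i s s', i <= beta s -> rpow (trace_rel pi) i s s' ->
     beta s' <= beta s - i).

End Programs.

From Pilot Require Import Defs.
From mathcomp Require Import all_boot.

(* Two accelerated steps of i and j iterations give i + j iterations, and the
   monotonicity of the bound guarantees j <= beta s' <= beta s - i, so that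
   i + j <= beta s and a single accelerated step covers them. *)

Section Accelerators.
Variables (Vars : finType) (Val : Type).

Implicit Types (R : Defs.rel Vars Val) (a b pi pihat : trace Vars Val).

Lemma trace_rel_cat a b s s'' :
  trace_rel (a ++ b) s s'' <-> exists s', trace_rel a s s' /\ trace_rel b s' s''.
Proof.
elim: a s => [|st a IH] s /=; split.
- by move=> H; exists s.
- by move=> [s' [-> H]].
- move=> [t [Ht /IH [u [Hu Hb]]]].
  by exists u; split => //; exists t.
- move=> [s' [[t [Ht Ha]] Hb]].
  by exists t; split => //; apply/IH; exists s'.
Qed.

Lemma rpow_add R i j s s1 s2 :
  rpow R i s s1 -> rpow R j s1 s2 -> rpow R (i + j) s s2.
Proof.
elim: i s => [|i IH] s /=.
- by move=> ->.
- by move=> [t [Ht Hr]] H; exists t; split => //; exact: IH Hr H.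
Qed.

Lemma accelerated_rel_trans pi pihat beta s s' s'' :
  under_accelerator pi pihat beta ->
  trace_rel pihat s s' -> trace_rel pihat s' s'' -> trace_rel pihat s s''.
Proof.
move=> [acc beta_mono] /acc [i [le_i pi_i]] /acc [j [le_j pi_j]].
apply/acc; exists (i + j); split; last exact: rpow_add pi_i pi_j.
have le_j_rest : j <= beta s - i by apply: leq_trans le_j (beta_mono _ _ _ le_i pi_i).
by rewrite -(subnKC le_i) leq_add2l.
Qed.

End Accelerators.

Theorem lemma1 (Vars : finType) (Val : Type) (V : finType) (P : CFA Vars Val V)
  (pi pihat : trace Vars Val) (beta : State Vars Val -> nat) :
  looping_trace P pi ->
  under_accelerator pi pihat beta ->
  subsumed (pihat ++ pihat) pihat.
Proof.
move=> _ acc s s'' /trace_rel_cat [s' [H1 H2]].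
exact: accelerated_rel_trans acc H1 H2.
Qed.
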